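(* Let $r \ge 0$ be a fixed integer. There is a constant $C>0$ (depending only on $r$) such that for every $r$-rank connected graph $G$ with vertex set $V=[n]$, there exists a hypergraph $H$ on $[n]$ with at most $C n^{r+1}$ hyperedges (i.e. $\mathcal O(n^{r+1})$ hyperedges) such that $\mathrm{cl}_r(H) = H_r(G)$.
   Context: For a graph $G=(V,E)$ and $X\subseteq V$, write $\overline X = V\setminus X$. The cut-rank $\rho(X)$ is the rank over the two-element field $\mathbb{F}_2$ of the submatrix of the adjacency matrix of $G$ with rows indexed by $X$ and columns indexed by $\overline X$. A set $X\subseteq V$ (identified with the cut $(X,\overline X)$) is a $k$-split if $\rho(X)\le k$; it is trivial if $\rho(X)=\min(|X|,|\overline X|)$. $G$ is $r$-rank connected if every $k$-split with $k<r$ is trivial. $H_r(G)$ is the hypergraph with vertex set $[n]$ whose hyperedges are all $r$-splits of $G$. A hypergraph on $[n]$ is identified with its set of hyperedges (subsets of $[n]$). $\mathcal K_r(n)$ is the class of hypergraphs $\mathcal E$ on $V=[n]$ such that: (R0) every $X\subseteq V$ with $|X|\le r$ is in $\mathcal E$; (R1) if $A\in\mathcal E$ then $V\setminus A\in\mathcal E$; (R2) if $A,B\in\mathcal E$ and $|A\cap B|\ge r$ then $A\cup B\in\mathcal E$. For a hypergraph $H$ on $[n]$, $\mathrm{cl}_r(H)$ is the intersection of all hypergraphs in $\mathcal K_r(n)$ containing $H$. *)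

From HB Require Import structures.
From mathcomp Require Import all_boot all_order all_algebra.
Set Implicit Arguments. Unset Strict Implicit. Unset Printing Implicit Defensive.
Import GRing.Theory.

Definition simple_graph (n : nat) (e : rel 'I_n) : Prop :=
  symmetric e /\ irreflexive e.

(* Submatrix over F_2 of the adjacency matrix, rows indexed by X, columns by ~: X. *)
Definition cut_matrix (n : nat) (e : rel 'I_n) (X : {set 'I_n}) :
  'M['F_2]_(#|X|, #|~: X|) :=
  \matrix_(i < #|X|, j < #|~: X|)
     ((e (enum_val i) (enum_val j))%:R)%R.

Definition cut_rank (n : nat) (e : rel 'I_n) (X : {set 'I_n}) : nat :=
  \rank (cut_matrix e X).

Definition is_split (n : nat) (e : rel 'I_n) (k : nat) (X : {set 'I_n}) : bool :=
  cut_rank e X <= k.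

Definition trivial_split (n : nat) (e : rel 'I_n) (X : {set 'I_n}) : bool :=
  cut_rank e X == minn #|X| #|~: X|.

Definition rank_connected (r n : nat) (e : rel 'I_n) : Prop :=
  forall (k : nat) (X : {set 'I_n}), k < r -> is_split e k X -> trivial_split e X.

Definition Hr (r n : nat) (e : rel 'I_n) : {set {set 'I_n}} :=
  [set X | is_split e r X].

Definition in_Krb (r n : nat) (E : {set {set 'I_n}}) : bool :=
  [&& [forall X : {set 'I_n}, (#|X| <= r) ==> (X \in E)],
      [forall A : {set 'I_n}, (A \in E) ==> (~: A \in E)] &
      [forall A : {set 'I_n}, forall B : {set 'I_n},
          [&& A \in E, B \in E & r <= #|A :&: B|] ==> (A :|: B \in E)]].

Definition clr (r n : nat) (H : {set {set 'I_n}}) : {set {set 'I_n}} :=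
  \bigcap_(E : {set {set 'I_n}} | in_Krb r E && (H \subset E)) E.

From mathcomp Require Import all_boot all_order all_algebra.
From mathcomp Require Import zify.
Set Implicit Arguments. Unset Strict Implicit. Unset Printing Implicit Defensive.
Import GRing.Theory.

(* Cut-rank is the rank of a submatrix of the adjacency matrix, hence symmetric
   and submodular; this puts H_r(G) in K_r(n).  For H take the minimal r-splits
   containing the (r+1)-subsets of [n], at most C(n, r+1) <= n^(r+1) sets.  By
   uncrossing with the rank-connectivity, the minimal split of an (r+1)-subset
   of an r-split X with |X| <= |~X| stays inside X, so X is glued by (R2) from
   such minimal splits through a common r-subset; (R1) handles the larger
   splits and (R0) the small ones. *)

Section SetMatrices.
Local Open Scope ring_scope.
Variables (F : fieldType) (n : nat).
Implicit Types (R C X Y U V : {set 'I_n}) (M : 'M[F]_n).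

Definition diag_set R : 'M[F]_n := diag_mx (\row_i (i \in R)%:R).

Lemma diag_setE R i j : diag_set R i j = ((i \in R) && (i == j))%:R.
Proof. by rewrite !mxE; case: (i \in R); case: (i == j). Qed.

Lemma diag_setM U V : diag_set U *m diag_set V = diag_set (U :&: V).
Proof.
apply/matrixP=> i j; rewrite mul_diag_mx !mxE inE.
by case: (i \in U); case: (i \in V); case: (i == j); rewrite ?mul1r ?mul0r.
Qed.

Lemma diag_setU U V : diag_set (U :|: V) = diag_set U + diag_set (~: U) *m diag_set V.
Proof.
apply/matrixP=> i j; rewrite diag_setM /diag_set !mxE !inE.
by case: (i \in U); case: (i \in V); case: (i == j); rewrite ?addr0 ?add0r.
Qed.

Lemma diag_setCr X : diag_set X + diag_set (~: X) = 1%:M.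
Proof.
apply/matrixP=> i j; rewrite /diag_set !mxE inE.
by case: (i \in X); case: (i == j); rewrite ?addr0 ?add0r.
Qed.

Lemma diag_set_id U V : U \subset V -> diag_set U *m diag_set V = diag_set U.
Proof. by move=> /setIidPl UV; rewrite diag_setM UV. Qed.

Lemma diag_set_disj X : diag_set (~: X) *m diag_set X = 0.
Proof.
rewrite diag_setM setIC setICr; apply/matrixP=> i j.
by rewrite diag_setE in_set0 mxE.
Qed.

Lemma diag_setS p U V (N : 'M[F]_(n, p)) :
  U \subset V -> (diag_set U *m N <= diag_set V *m N)%MS.
Proof. by move=> /diag_set_id <-; rewrite -mulmxA submxMl. Qed.

Lemma diag_setS1 U V : U \subset V -> (diag_set U <= diag_set V)%MS.
Proof. by move=> /(diag_setS 1%:M); rewrite !mulmx1. Qed.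

Definition row_select R : 'M[F]_(#|R|, n) := rowsub enum_val 1%:M.

Lemma row_select_tr R : row_select R *m (row_select R)^T = 1%:M.
Proof.
rewrite trmx_mxsub trmx1 -mxsub_mul mul1mx; apply/matrixP => i j.
by rewrite !mxE (inj_eq enum_val_inj).
Qed.

Lemma tr_row_select R : (row_select R)^T *m row_select R = diag_set R.
Proof.
apply/matrixP => a b; rewrite diag_setE !mxE.
case: (boolP (a \in R)) => aR /=.
  rewrite (bigD1 (enum_rank_in aR a)) //= !mxE enum_rankK_in // eqxx mul1r.
  rewrite big1 ?addr0 // => i ia; rewrite !mxE.
  suff /negbTE -> : enum_val i != a by rewrite mul0r.
  by apply: contra ia => /eqP ea; rewrite -(enum_valK_in aR i) ea.
rewrite big1 // => i _; rewrite !mxE.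
suff /negbTE -> : enum_val i != a by rewrite mul0r.
by apply: contraNneq aR => <-; apply: enum_valP.
Qed.

Lemma row_select_free R : row_free (row_select R).
Proof. by apply/row_freeP; exists (row_select R)^T; apply: row_select_tr. Qed.

Definition subrank M X Y := \rank (diag_set X *m M *m diag_set Y).

Lemma mxrank_enum_submx M R C :
  \rank (\matrix_(i < #|R|, j < #|C|) M (enum_val i) (enum_val j)) = subrank M R C.
Proof.
have -> : \matrix_(i < #|R|, j < #|C|) M (enum_val i) (enum_val j)
          = row_select R *m M *m (row_select C)^T.
  rewrite trmx_mxsub trmx1 -mulmxA mulmx_colsub mulmx1 -mxsub_mul mul1mx.
  by apply/matrixP => i j; rewrite !mxE.
rewrite /subrank; set N := row_select R *m M *m _.
have -> : diag_set R *m M *m diag_set C = (row_select R)^T *m N *m row_select C.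
  by rewrite /N -!tr_row_select !mulmxA.
rewrite mxrankMfree ?row_select_free // -[RHS]mxrank_tr trmx_mul trmxK.
by rewrite [RHS]mxrankMfree ?row_select_free // mxrank_tr.
Qed.

Lemma mxrank_diag_set R : \rank (diag_set R) = #|R|.
Proof.
have := mxrank_enum_submx 1%:M R R.
rewrite /subrank mulmx1 diag_set_id // => <-.
rewrite -[RHS](mxrank1 F #|R|); congr (\rank _).
by apply/matrixP => i j; rewrite !mxE (inj_eq enum_val_inj).
Qed.

(* As [\rank (subrank_space M X Y) = #|~: X| + subrank M X Y], the modular law
   for ranks of subspaces yields the submodularity of [subrank]. *)
Definition subrank_space M X Y := (diag_set (~: X) + diag_set Y *m M^T)%MS.

Lemma mxrank_subrank_space M X Y :
  \rank (subrank_space M X Y) = (#|~: X| + subrank M X Y)%N.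
Proof.
set B := diag_set Y *m M^T.
have splitB : B = B *m diag_set X + B *m diag_set (~: X).
  by rewrite -mulmxDr diag_setCr mulmx1.
have sub_sum (Z W : 'M[F]_n) : (Z *m diag_set (~: X) <= diag_set (~: X) + W)%MS.
  exact: submx_trans (submxMl _ _) (addsmxSl _ _).
have eq_space : (diag_set (~: X) + B == diag_set (~: X) + B *m diag_set X)%MS.
  apply/andP; split; rewrite addsmx_sub addsmxSl /=.
    rewrite [X in (X <= _)%MS]splitB.
    by apply: addmx_sub; [apply: addsmxSr | apply: sub_sum].
  rewrite [X in (X <= _)%MS](_ : _ = B - B *m diag_set (~: X)); last first.
    by rewrite {2}splitB addrK.
  by apply: addmx_sub; [apply: addsmxSr | rewrite eqmx_opp sub_sum].
have cap0 : (\rank (diag_set (~: X) :&: B *m diag_set X) = 0)%N.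
  apply/eqP; rewrite mxrank_eq0; set D := (_ :&: _)%MS.
  have /submxP [D1 D1E] : (D <= diag_set (~: X))%MS by apply: capmxSl.
  have /submxP [D2 D2E] : (D <= B *m diag_set X)%MS by apply: capmxSr.
  have : D *m diag_set X = D by rewrite D2E -!mulmxA diag_set_id.
  by rewrite {1}D1E -mulmxA diag_set_disj mulmx0 => <-.
rewrite /subrank_space -/B (eqmx_rank eq_space).
rewrite -[LHS]addn0 -cap0 mxrank_sum_cap mxrank_diag_set; congr (_ + _)%N.
by rewrite /subrank -mxrank_tr !trmx_mul !tr_diag_mx trmxK mulmxA.
Qed.

Lemma subrank_spaceU M X1 X2 Y1 Y2 :
  (subrank_space M (X1 :&: X2) (Y1 :|: Y2)
     <= subrank_space M X1 Y1 + subrank_space M X2 Y2)%MS.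
Proof.
rewrite /subrank_space addsmx_sub; apply/andP; split.
  rewrite setCI diag_setU; apply: addmx_sub.
    exact: submx_trans (addsmxSl _ _) (addsmxSl _ _).
  exact: submx_trans (submxMl _ _) (submx_trans (addsmxSl _ _) (addsmxSr _ _)).
rewrite diag_setU mulmxDl -mulmxA; apply: addmx_sub.
  exact: submx_trans (addsmxSr _ _) (addsmxSl _ _).
exact: submx_trans (submxMl _ _) (submx_trans (addsmxSr _ _) (addsmxSr _ _)).
Qed.

Lemma subrank_spaceI M X1 X2 Y1 Y2 :
  (subrank_space M (X1 :|: X2) (Y1 :&: Y2)
     <= subrank_space M X1 Y1 :&: subrank_space M X2 Y2)%MS.
Proof.
rewrite sub_capmx; apply/andP; split; apply: addsmxS.
- by apply: diag_setS1; rewrite setCS subsetUl.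
- exact/diag_setS/subsetIl.
- by apply: diag_setS1; rewrite setCS subsetUr.
- exact/diag_setS/subsetIr.
Qed.

Lemma subrank_submod M X1 X2 Y1 Y2 :
  (subrank M (X1 :&: X2) (Y1 :|: Y2) + subrank M (X1 :|: X2) (Y1 :&: Y2)
   <= subrank M X1 Y1 + subrank M X2 Y2)%N.
Proof.
have leU := mxrankS (subrank_spaceU M X1 X2 Y1 Y2).
have leI := mxrankS (subrank_spaceI M X1 X2 Y1 Y2).
have modular := mxrank_sum_cap (subrank_space M X1 Y1) (subrank_space M X2 Y2).
move: leU leI modular; rewrite !mxrank_subrank_space.
have := cardsUI (~: X1) (~: X2); rewrite -setCI -setCU.
lia.
Qed.
End SetMatrices.

Section CutRank.
Variables (n : nat) (e : rel 'I_n).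
Implicit Types X Y A B : {set 'I_n}.

Definition adjmx : 'M['F_2]_n := \matrix_(i, j) ((e i j)%:R)%R.

Lemma cut_rankE X : cut_rank e X = subrank adjmx X (~: X).
Proof.
rewrite /cut_rank -mxrank_enum_submx; congr (\rank _).
by apply/matrixP => i j; rewrite !mxE.
Qed.

Lemma cut_rank_leq_card X : cut_rank e X <= #|X|.
Proof. exact: rank_leq_row. Qed.

Lemma cut_rank_leq_cardC X : cut_rank e X <= #|~: X|.
Proof. exact: rank_leq_col. Qed.

Lemma cut_rank_submod A B :
  cut_rank e (A :&: B) + cut_rank e (A :|: B) <= cut_rank e A + cut_rank e B.
Proof. by rewrite !cut_rankE setCI setCU; apply: subrank_submod. Qed.

Lemma cut_rankC : symmetric e -> forall X, cut_rank e (~: X) = cut_rank e X.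
Proof.
move=> esym X; rewrite !cut_rankE setCK /subrank -mxrank_tr !trmx_mul !tr_diag_mx.
have -> : (adjmx^T)%R = adjmx by apply/matrixP => i j; rewrite !mxE esym.
by rewrite mulmxA.
Qed.

End CutRank.

Lemma subset_of_card (T : finType) (k : nat) (X : {set T}) :
  k <= #|X| -> exists2 S : {set T}, S \subset X & #|S| = k.
Proof.
elim: k => [|k IH] k_le; first by exists set0; rewrite ?sub0set ?cards0.
have [S SX cardS] := IH (ltnW k_le).
have : 0 < #|X :\: S| by rewrite cardsD (setIidPr SX); lia.
case/card_gt0P => x; rewrite inE => /andP [xS xX].
by exists (x |: S); rewrite ?subUset ?sub1set ?xX ?cardsU1 ?xS ?cardS.
Qed.

Lemma bin_leq_exp (m k : nat) : 'C(m, k) <= m ^ k.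
Proof.
apply: leq_trans (leq_pmulr _ (fact_gt0 k)) _; rewrite bin_ffact ffact_prod.
rewrite (_ : m ^ k = \prod_(i < k) m); last by rewrite prod_nat_const card_ord.
by apply: leq_prod => i _; apply: leq_subr.
Qed.

Section Splits.
Variables (r n : nat) (e : rel 'I_n).
Hypothesis esym : symmetric e.
Hypothesis e_conn : rank_connected r e.
Implicit Types S X Y P A B : {set 'I_n}.

Local Notation rho := (cut_rank e).
Local Notation split := (is_split e r).

Lemma low_cut_rank_trivial Y : rho Y < r -> rho Y = minn #|Y| #|~: Y|.
Proof. by move=> lt_r; apply/eqP; apply: (e_conn lt_r); rewrite /is_split. Qed.

Lemma Hr_in_Kr : in_Krb r (Hr r e).
Proof.
apply/and3P; split.
- apply/forallP => X; apply/implyP => small; rewrite inE.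
  exact: leq_trans (cut_rank_leq_card e X) small.
- by apply/forallP => A; apply/implyP; rewrite !inE /is_split cut_rankC.
apply/forallP => A; apply/forallP => B; apply/implyP => /and3P [].
rewrite !inE /is_split => splitA splitB r_le.
have submod := cut_rank_submod e A B.
have leC : #|~: (A :|: B)| <= #|~: (A :&: B)|.
  by apply/subset_leq_card; rewrite setCS (subset_trans (subsetIl A B) (subsetUl A B)).
(* A trivial [rho (A :&: B) < r] must equal [#|~: (A :&: B)|], which bounds
   [rho (A :|: B)]; otherwise submodularity does. *)
have := cut_rank_leq_cardC e (A :|: B).
case: (ltnP (rho (A :&: B)) r) => [/low_cut_rank_trivial|]; lia.
Qed.

Definition min_split S : {set 'I_n} :=
  [arg min_(Y < setT | split Y && (S \subset Y)) #|Y|].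

Definition min_splits : {set {set 'I_n}} :=
  min_split @: [set S : {set 'I_n} | #|S| == r.+1].

Lemma min_split_spec S :
  [/\ split (min_split S), S \subset min_split S &
      forall Y, split Y -> S \subset Y -> #|min_split S| <= #|Y|].
Proof.
rewrite /min_split; case: arg_minnP.
  by rewrite subsetT /is_split (leq_trans (cut_rank_leq_cardC e _)) ?setCT ?cards0.
move=> P /andP [splitP SP] minP; split => // Y splitY SY.
by apply: minP; rewrite splitY.
Qed.

Lemma min_splits_sub_Hr : min_splits \subset Hr r e.
Proof.
apply/subsetP => _ /imsetP [S _ ->]; rewrite inE.
by case: (min_split_spec S).
Qed.

Lemma card_min_splits : #|min_splits| <= n ^ r.+1.
Proof.
apply: leq_trans (leq_imset_card _ _) _.
by rewrite card_draws card_ord bin_leq_exp.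
Qed.

(* Uncrossing: were [P := min_split S] not inside [X], then [P :&: X] would be
   a smaller set containing [S], hence of cut-rank above [r], and submodularity
   would force [P :|: X] to have cut-rank below [r], i.e. to be trivial; this
   contradicts [#|X| <= #|~: X|.+1]. *)
Lemma min_split_sub S X :
  r < #|S| -> S \subset X -> split X -> #|X| <= #|~: X|.+1 -> min_split S \subset X.
Proof.
move=> r_lt SX splitX X_small.
have [splitP SP minP] := min_split_spec S.
set P := min_split S in splitP SP minP *.
apply: contraT => notPX.
have cardPX : 0 < #|P :\: X| by rewrite card_gt0 setD_eq0.
have SPX : S \subset P :&: X by rewrite subsetI SP.
have rho_PIX : r < rho (P :&: X).
  rewrite ltnNge; apply/negP => splitPX.
  have := minP _ splitPX SPX; have := cardsID X P; lia.
have rho_PUX : rho (P :|: X) < r.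
  have := cut_rank_submod e P X; move: splitP splitX; rewrite /is_split; lia.
have cardCX : #|P :\: X| + #|~: (P :|: X)| = #|~: X|.
  by rewrite -(cardsID P (~: X)) setCU setDE [~: X :\: P]setDE !(setIC (~: X)).
have := low_cut_rank_trivial rho_PUX; have := minP _ splitX SX.
have := subset_leq_card SPX; have := subset_leq_card (subset_trans SX (subsetUr P X)).
have := cardsID X P; lia.
Qed.

Section Closure.
Variable E : {set {set 'I_n}}.
Hypotheses (E_Kr : in_Krb r E) (min_splits_E : min_splits \subset E).

Lemma Kr_small X : #|X| <= r -> X \in E.
Proof. by case/and3P: E_Kr => /forallP /(_ X) /implyP. Qed.

Lemma Kr_compl X : X \in E -> ~: X \in E.
Proof. by case/and3P: E_Kr => _ /forallP /(_ X) /implyP. Qed.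

Lemma Kr_union A B : A \in E -> B \in E -> r <= #|A :&: B| -> A :|: B \in E.
Proof.
case/and3P: E_Kr => _ _ /forallP /(_ A) /forallP /(_ B) /implyP R2 EA EB r_le.
by apply: R2; rewrite EA EB r_le.
Qed.

Lemma Kr_bigcup (T I : {set 'I_n}) (F : 'I_n -> {set 'I_n}) :
  #|T| = r -> (forall x, x \in I -> F x \in E /\ T \subset F x) ->
  T :|: \bigcup_(x in I) F x \in E.
Proof.
move=> cardT EF; elim/big_rec: _ => [|x U xI EU]; first by rewrite setU0 Kr_small ?cardT.
have [EFx TFx] := EF x xI.
by rewrite setUCA Kr_union // -cardT subset_leq_card // subsetI TFx subsetUl.
Qed.

(* [X] is the union of a base [T] of size [r] and the minimal splits of the
   sets [x |: T], which all lie in [X] and contain [T], so (R2) glues them. *)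
Lemma split_in_Kr_half X : split X -> #|X| <= #|~: X| -> X \in E.
Proof.
move=> splitX X_small; have [X_le_r | r_lt] := leqP #|X| r; first exact: Kr_small.
have [T TX cardT] := subset_of_card (ltnW r_lt).
have piece x : x \in X :\: T ->
    [/\ min_split (x |: T) \in E, T \subset min_split (x |: T),
        x \in min_split (x |: T) & min_split (x |: T) \subset X].
  rewrite inE => /andP [xT xX].
  have [_ SP _] := min_split_spec (x |: T).
  split.
  - by apply: (subsetP min_splits_E); apply: imset_f; rewrite inE cardsU1 xT cardT.
  - exact: subset_trans (subsetUr _ _) SP.
  - by apply: (subsetP SP); rewrite setU11.
  - by apply: min_split_sub; rewrite ?cardsU1 ?xT ?cardT ?subUset ?sub1set ?xX //; lia.
suff -> : X = T :|: \bigcup_(x in X :\: T) min_split (x |: T).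
  by apply: Kr_bigcup => // x /piece [].
apply/eqP; rewrite eqEsubset subUset TX /=; apply/andP; split.
  apply/subsetP => y yX; rewrite inE; case: (boolP (y \in T)) => //= yT.
  have yXT : y \in X :\: T by rewrite inE yT yX.
  by apply/bigcupP; exists y => //; case: (piece y yXT).
by apply/bigcupsP => x /piece [].
Qed.

Lemma split_in_Kr X : split X -> X \in E.
Proof.
move=> splitX; have [|X_big] := leqP #|X| #|~: X|; first exact: split_in_Kr_half.
rewrite -(setCK X); apply/Kr_compl/split_in_Kr_half.
  by rewrite /is_split cut_rankC.
by rewrite setCK ltnW.
Qed.

End Closure.
End Splits.

Theorem theorem1 (r : nat) :
  exists C : nat, 0 < C /\
    forall (n : nat) (e : rel 'I_n),
      simple_graph e -> rank_connected r e ->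
      exists H : {set {set 'I_n}},
        #|H| <= C * n ^ r.+1 /\ clr r H = Hr r e.
Proof.
exists 1; split => // n e [esym _] e_conn.
exists (min_splits r e); rewrite mul1n card_min_splits; split => //.
apply/eqP; rewrite eqEsubset; apply/andP; split.
  by apply: bigcap_inf; rewrite Hr_in_Kr // min_splits_sub_Hr.
apply/subsetP => X; rewrite inE => splitX; apply/bigcapP => E /andP [E_Kr HE].
by apply: (split_in_Kr esym e_conn E_Kr HE splitX).
Qed.
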